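(* For all $f\in\mathcal{D}_2$, $\varphi\in\mathcal{D}_1$, $g\in\mathcal{N}_2$ and $\gamma\in\mathcal{N}_1$ we have the adjoint relations \begin{align*} \langle \varphi, \mathcal{M}_{\mathcal{B}}^{\Omega}\, \mathcal{D}^{\mathcal{B}}_\Omega f\rangle &= \langle\mathcal{M}_{\mathcal{B}^*}^{\Omega}\, \mathcal{D}^{\mathcal{B}^*}_\Omega \varphi, f\rangle,\\ \langle \gamma, \operatorname{Tr}_2 \mathcal{S}^L_\Omega g\rangle &= \langle \operatorname{Tr}_1 \mathcal{S}^{L^*}_\Omega \gamma, g\rangle. \end{align*} Moreover, if for $f\in\mathcal{D}_2$ we set $\operatorname{Tr}_2^\Omega \mathcal{D}^{\mathcal{B}}_\Omega f = -\operatorname{Tr}_2 F + \operatorname{Tr}_2 \mathcal{P}^L(L(1_\Omega F))$, where $F\in\mathcal{H}_2$ is any element with $\operatorname{Tr}_2 F=f$, then $\operatorname{Tr}_2^\Omega \mathcal{D}^{\mathcal{B}}_\Omega f$ does not depend on the choice of $F$, and \begin{equation*} \langle \gamma, \operatorname{Tr}_2^\Omega \mathcal{D}^{\mathcal{B}}_\Omega f\rangle = \langle-\gamma+\mathcal{M}_{\mathcal{B}^*}^{\Omega}\mathcal{S}^{L^*}_\Omega\gamma, f\rangle . \end{equation*}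
   Context: Setting: $\mathcal{H}_1,\mathcal{H}_2$ are Hilbert spaces; $\widehat{\mathcal{H}}_j^\Omega,\widehat{\mathcal{H}}_j^{\mathcal{C}},\widehat{\mathcal{D}}_j$ ($j=1,2$) are vector spaces; $\operatorname{Tr}_j:\mathcal{H}_j\to\widehat{\mathcal{D}}_j$ and restriction maps $F\mapsto F|_\Omega\in\widehat{\mathcal{H}}_j^\Omega$, $F\mapsto F|_{\mathcal{C}}\in\widehat{\mathcal{H}}_j^{\mathcal{C}}$ are bounded linear operators. Let $\mathcal{H}_j^\Omega=\{F|_\Omega:F\in\mathcal{H}_j\}$, $\mathcal{H}_j^{\mathcal{C}}=\{F|_{\mathcal{C}}:F\in\mathcal{H}_j\}$, $\mathcal{D}_j=\{\operatorname{Tr}_jF:F\in\mathcal{H}_j\}$ (modulo null elements), each with the quotient norm $\|f\|=\inf\{\|F\|_{\mathcal{H}_j}\}$ over $F$ mapping to $f$. $\mathcal{B}:\mathcal{H}_1\times\mathcal{H}_2\to\mathbb{C}$, $\mathcal{B}^\Omega:\mathcal{H}_1^\Omega\times\mathcal{H}_2^\Omega\to\mathbb{C}$, $\mathcal{B}^{\mathcal{C}}:\mathcal{H}_1^{\mathcal{C}}\times\mathcal{H}_2^{\mathcal{C}}\to\mathbb{C}$ are bounded bilinear (sesquilinear) forms such that: (i) $\mathcal{B}$ is coercive: for some $\lambda>0$, $\sup_{w\neq0}|\mathcal{B}(w,v)|/\|w\|_{\mathcal{H}_1}\ge\lambda\|v\|_{\mathcal{H}_2}$ and $\sup_{w\ne0}|\mathcal{B}(u,w)|/\|w\|_{\mathcal{H}_2}\ge\lambda\|u\|_{\mathcal{H}_1}$;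 (ii) $\mathcal{B}(u,v)=\mathcal{B}^\Omega(u|_\Omega,v|_\Omega)+\mathcal{B}^{\mathcal{C}}(u|_{\mathcal{C}},v|_{\mathcal{C}})$; (iii) if $\varphi,\psi\in\mathcal{H}_j$ with $\operatorname{Tr}_j\varphi=\operatorname{Tr}_j\psi$, there is $w\in\mathcal{H}_j$ with $w|_\Omega=\varphi|_\Omega$, $w|_{\mathcal{C}}=\psi|_{\mathcal{C}}$, $\operatorname{Tr}_jw=\operatorname{Tr}_j\varphi$. Definitions: $\mathcal{N}_2=\mathcal{D}_1^*$, $\mathcal{N}_1=\mathcal{D}_2^*$. For $u\in\mathcal{H}_2^\Omega$, $L(1_\Omega u)\in\mathcal{H}_1^*$ is $\langle\varphi,L(1_\Omega u)\rangle=\mathcal{B}^\Omega(\varphi|_\Omega,u)$; $(Lu)|_\Omega=0$ means $\mathcal{B}^\Omega(\varphi|_\Omega,u)=0$ whenever $\operatorname{Tr}_1\varphi=0$, and then the Neumann data $\mathcal{M}^\Omega_{\mathcal{B}}u\in\mathcal{N}_2$ is defined by $\langle\operatorname{Tr}_1\varphi,\mathcal{M}^\Omega_{\mathcal{B}}u\rangle=\mathcal{B}^\Omega(\varphi|_\Omega,u)$ for all $\varphi\in\mathcal{H}_1$. The Newton potential $\mathcal{P}^LH\in\mathcal{H}_2$ (for $H\in\mathcal{H}_1^*$) is the unique element with $\mathcal{B}(\varphi,\mathcal{P}^LH)=\langle\varphi,H\rangle$ for all $\varphi\in\mathcal{H}_1$ (Lax–Milgram). The single layer potential $\mathcal{S}^L_\Omega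 g\in\mathcal{H}_2$ ($g\in\mathcal{N}_2$) is the unique element with $\mathcal{B}(\varphi,\mathcal{S}^L_\Omega g)=\langle\operatorname{Tr}_1\varphi,g\rangle$ for all $\varphi\in\mathcal{H}_1$. The double layer potential is $\mathcal{D}^{\mathcal{B}}_\Omega f=-F|_\Omega+\mathcal{P}^L(L(1_\Omega F))|_\Omega\in\mathcal{H}_2^\Omega$ for any $F\in\mathcal{H}_2$ with $\operatorname{Tr}_2F=f$ (well defined). The adjoint form is $\mathcal{B}^*(\varphi,\psi)=\overline{\mathcal{B}(\psi,\varphi)}$ on $\mathcal{H}_2\times\mathcal{H}_1$ (similarly $\mathcal{B}^\Omega_*,\mathcal{B}^{\mathcal{C}}_*$), with associated operator $L^*$; it is bounded and coercive, so the same constructions give $\mathcal{D}^{\mathcal{B}^*}_\Omega:\mathcal{D}_1\to\mathcal{H}_1^\Omega$, $\mathcal{S}^{L^*}_\Omega:\mathcal{N}_1\to\mathcal{H}_1$, and $\mathcal{M}^\Omega_{\mathcal{B}^*}$. *)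

From HB Require Import structures.
From mathcomp Require Import all_boot all_order all_algebra.
From mathcomp Require Import complex.
From mathcomp Require Import boolp classical_sets reals.
From Stdlib Require Import ClassicalEpsilon.
Set Implicit Arguments. Unset Strict Implicit. Unset Printing Implicit Defensive.
Import Order.TTheory GRing.Theory Num.Theory.
Local Open Scope ring_scope.
Local Open Scope classical_set_scope.

Section Defs.
Variable R : realType.
Local Notation K := (R[i]).

Definition cmod (z : K) : R := Num.sqrt (complex.Re z ^+ 2 + complex.Im z ^+ 2).
Definition cconj (z : K) : K := complex.conjc z.

Section Hilbert.
Variable H : lmodType K.
Variable ip : H -> H -> K.
Definition hnorm (x : H) : R := Num.sqrt (complex.Re (ip x x)).
Definition is_hilbert : Prop :=
  [/\ (forall a x y z, ip (a *: x + y) z = a * ip x z + ip y z),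
      (forall x y, ip y x = cconj (ip x y)),
      (forall x, x != 0 -> 0 < complex.Re (ip x x)) &
      (forall u : nat -> H,
         (forall e : R, 0 < e -> exists N, forall m n, (N <= m)%N -> (N <= n)%N ->
              hnorm (u m - u n) < e) ->
         exists l, forall e : R, 0 < e -> exists N, forall n, (N <= n)%N ->
              hnorm (u n - l) < e)].
End Hilbert.

Definition is_linear (U V : lmodType K) (f : U -> V) : Prop :=
  forall a x y, f (a *: x + y) = a *: f x + f y.

Definition qnorm (H : lmodType K) (ip : H -> H -> K) (X : lmodType K) (T : H -> X)
  (x : X) : R := inf [set hnorm ip F | F in [set F | T F = x]].

Definition is_dual (H : lmodType K) (ip : H -> H -> K) (h : H -> K) : Prop :=
  is_linear (h : H -> K^o) /\ exists c : R, forall x, cmod (h x) <= c * hnorm ip x.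

(* elements of (image of T, with quotient norm)^*, i.e. of D_j^* ; they are
   represented as functions on the ambient space, only their values on the
   image of T matter. *)
Definition is_qdual (H : lmodType K) (ip : H -> H -> K) (X : lmodType K) (T : H -> X)
  (g : X -> K) : Prop :=
  (forall a F G, g (T (a *: F + G)) = a * g (T F) + g (T G)) /\
  exists c : R, forall F, cmod (g (T F)) <= c * qnorm ip T (T F).

Definition is_sesqui (U V : lmodType K) (B : U -> V -> K) : Prop :=
  (forall a x x' y, B (a *: x + x') y = a * B x y + B x' y) /\
  (forall a x y y', B x (a *: y + y') = cconj a * B x y + B x y').

(* sesquilinear form on images of restriction maps (only values on images
   matter), bounded for the quotient norms *)
Definition is_bounded_sesqui_on (H1 H2 X1 X2 : lmodType K)
  (ip1 : H1 -> H1 -> K) (ip2 : H2 -> H2 -> K) (r1 : H1 -> X1) (r2 : H2 -> X2)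
  (b : X1 -> X2 -> K) : Prop :=
  [/\ (forall a F F' G, b (r1 (a *: F + F')) (r2 G) = a * b (r1 F) (r2 G) + b (r1 F') (r2 G)),
      (forall a F G G', b (r1 F) (r2 (a *: G + G')) = cconj a * b (r1 F) (r2 G) + b (r1 F) (r2 G')) &
      exists c : R, forall F G,
        cmod (b (r1 F) (r2 G)) <= c * qnorm ip1 r1 (r1 F) * qnorm ip2 r2 (r2 G)].

Definition is_coercive (H1 H2 : lmodType K)
  (ip1 : H1 -> H1 -> K) (ip2 : H2 -> H2 -> K) (B : H1 -> H2 -> K) : Prop :=
  exists lam : R, 0 < lam /\
   (forall v : H2, lam * hnorm ip2 v <=
       sup [set cmod (B w v) / hnorm ip1 w | w in [set w : H1 | w != 0]]) /\
   (forall u : H1, lam * hnorm ip1 u <=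
       sup [set cmod (B u w) / hnorm ip2 w | w in [set w : H2 | w != 0]]).

Definition adjf (U V : Type) (B : U -> V -> K) : V -> U -> K :=
  fun x y => cconj (B y x).

(* L(1_Omega u) in H_a^*  :  phi |-> B^Omega(phi|_Omega, u) *)
Definition Lop (Ha Xa Xb : Type) (ra : Ha -> Xa) (b : Xa -> Xb -> K) (u : Xb) : Ha -> K :=
  fun phi => b (ra phi) u.

(* double layer potential D^B_Omega f, computed from a representative F with Tr F = f;
   P is the Newton potential (solution operator of the form B) *)
Definition DL (Ha Hb Xa Xb : lmodType K) (P : (Ha -> K) -> Hb) (ra : Ha -> Xa) (rb : Hb -> Xb)
  (b : Xa -> Xb -> K) (F : Hb) : Xb :=
  - rb F + rb (P (Lop ra b (rb F))).

Definition TrDL (Ha Hb Xa Xb Db : lmodType K) (P : (Ha -> K) -> Hb) (ra : Ha -> Xa)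
  (rb : Hb -> Xb) (b : Xa -> Xb -> K) (Trb : Hb -> Db) (F : Hb) : Db :=
  - Trb F + Trb (P (Lop ra b (rb F))).

(* single layer potential S^L_Omega g : the solution of B(phi, S g) = <Tr phi, g> *)
Definition SL (Ha Hb Da : Type) (P : (Ha -> K) -> Hb) (Tra : Ha -> Da) (g : Da -> K) : Hb :=
  P (fun phi => g (Tra phi)).

(* Neumann data M^Omega_B u, element of D_a^*:  <Tr phi, M u> = B^Omega(phi|_Omega, u);
   it is evaluated through an (arbitrarily chosen) preimage of the trace *)
Definition MN (Ha Xa Xb Da : lmodType K) (Tra : Ha -> Da) (ra : Ha -> Xa)
  (b : Xa -> Xb -> K) (u : Xb) : Da -> K :=
  fun d => b (ra (epsilon (inhabits (0 : Ha)) (fun phi => Tra phi = d))) u.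

Definition pairL (D : Type) (d : D) (g : D -> K) : K := g d.
Definition pairR (D : Type) (g : D -> K) (d : D) : K := cconj (g d).

End Defs.

(* The Newton potential u = P^L(L(1_Omega F)) satisfies
   B(psi, u) = B^Omega(psi|_Omega, F), so B^Omega(psi|_Omega, u - F) equals
   -B^C(psi|_C, u). It only sees psi on C, hence, by gluing, only Tr psi: the
   Neumann data of D f can be evaluated on any preimage of the trace. The adjoint
   relations then come from testing the defining equations of P^L and P^{L^*}
   against each other's potentials, and the independence of Tr^Omega D f from F
   from the uniqueness of P^L given by coercivity. *)
From HB Require Import structures.
From mathcomp Require Import all_boot all_order all_algebra.
From mathcomp Require Import complex.
From mathcomp Require Import boolp classical_sets reals.
From Stdlib Require Import ClassicalEpsilon.
Set Implicit Arguments. Unset Strict Implicit.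
Import Order.TTheory GRing.Theory Num.Theory.
Local Open Scope ring_scope.
Local Open Scope classical_set_scope.

Section Gluing.
Variables (H XO XC D T : Type) (rO : H -> XO) (rC : H -> XC) (Tr : H -> D).
Hypothesis glue : forall x y, Tr x = Tr y ->
  exists w, [/\ rO w = rO x, rC w = rC y & Tr w = Tr x].

Lemma glue_trace_determined (q : XO -> T) (h : D -> XC -> T) :
  (forall x, q (rO x) = h (Tr x) (rC x)) ->
  forall x y, Tr x = Tr y -> q (rO x) = q (rO y).
Proof.
move=> qE x y Txy; have [w [wO wC wT]] := glue Txy.
by rewrite -wO !qE wC wT Txy.
Qed.
End Gluing.

Section Complex.
Variable R : realType.
Local Notation K := (R[i]).

Lemma cmod_conj (z : K) : cmod (cconj z) = cmod z.
Proof. by case: z => a b; rewrite /cmod /cconj /= sqrrN. Qed.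

Lemma cconjK : involutive (@cconj R).
Proof. exact: conjcK. Qed.

Lemma cconj_inj : injective (@cconj R).
Proof. exact: inv_inj cconjK. Qed.

Section Linear.
Variables (U V : lmodType K) (f : U -> V).
Hypothesis lf : is_linear f.

Lemma is_linear0 : f 0 = 0.
Proof.
have := lf 1 0 0; rewrite !scale1r addr0 => f0.
by apply: (@addrI _ (f 0)); rewrite addr0 -f0.
Qed.

Lemma is_linearB x y : f (x - y) = f x - f y.
Proof. by have := lf (-1) y x; rewrite !scaleN1r addrC => ->; rewrite addrC. Qed.
End Linear.

Lemma sesquiBr (U V : lmodType K) (B : U -> V -> K) x y y' :
  is_sesqui B -> B x (y - y') = B x y - B x y'.
Proof.
case=> _ Br; have := Br (-1) x y' y.
by rewrite scaleN1r /cconj rmorphN1 mulN1r addrC => ->; rewrite addrC.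
Qed.

Section Quotient_norm.
Variables (H X : lmodType K) (ip : H -> H -> K) (T : H -> X).

Lemma qnorm_ge0 F : 0 <= qnorm ip T (T F).
Proof.
apply: lb_le_inf; first by exists (hnorm ip F); exists F.
by move=> _ [G _ <-]; exact: sqrtr_ge0.
Qed.

Lemma qnorm_le_hnorm F : qnorm ip T (T F) <= hnorm ip F.
Proof.
apply: ge_inf; last by exists F.
by exists 0 => _ [G _ <-]; exact: sqrtr_ge0.
Qed.

Lemma ler_qnorm (c : R) F : c * qnorm ip T (T F) <= `|c| * hnorm ip F.
Proof.
apply: (@le_trans _ _ (`|c| * qnorm ip T (T F))).
  by apply: ler_wpM2r; [exact: qnorm_ge0 | exact: ler_norm].
by apply: ler_wpM2l; [exact: normr_ge0 | exact: qnorm_le_hnorm].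
Qed.

Lemma qnorm0 : is_hilbert ip -> is_linear T -> qnorm ip T 0 = 0.
Proof.
case=> ipl _ _ _ lT; have ip0 : ip 0 0 = 0.
  have := ipl 1 0 0 0; rewrite scale1r addr0 mul1r => ip00.
  by apply: (@addrI _ (ip 0 0)); rewrite addr0 -ip00.
have hnorm0 : hnorm ip 0 = 0 by rewrite /hnorm ip0 /= sqrtr0.
apply/le_anti/andP; split.
  by have := qnorm_le_hnorm 0; rewrite (is_linear0 lT) hnorm0.
by have := qnorm_ge0 0; rewrite (is_linear0 lT).
Qed.

Lemma is_qdual_comp g : is_qdual ip T g -> is_dual ip (fun F => g (T F)).
Proof.
case=> gl [c gc]; split; first by move=> a x y; rewrite /= gl.
by exists `|c| => x; apply: le_trans (gc x) (ler_qnorm c x).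
Qed.

Lemma is_qdualB g : is_qdual ip T g -> is_linear T ->
  forall F G, g (T (F - G)) = g (T F) - g (T G).
Proof.
by case=> gl _ lT F G; rewrite addrC -scaleN1r gl mulN1r addrC.
Qed.
End Quotient_norm.

Section Sesquilinear_on.
Variables (H1 H2 X1 X2 : lmodType K) (ip1 : H1 -> H1 -> K) (ip2 : H2 -> H2 -> K)
  (r1 : H1 -> X1) (r2 : H2 -> X2) (b : X1 -> X2 -> K).
Hypothesis bb : is_bounded_sesqui_on ip1 ip2 r1 r2 b.

Lemma sesqui_onBl F F' G : b (r1 (F - F')) (r2 G) = b (r1 F) (r2 G) - b (r1 F') (r2 G).
Proof.
case: bb => bl _ _; have := bl (-1) F' F G.
by rewrite scaleN1r mulN1r addrC => ->; rewrite addrC.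
Qed.

Lemma sesqui_onBr F G G' : b (r1 F) (r2 (G - G')) = b (r1 F) (r2 G) - b (r1 F) (r2 G').
Proof.
case: bb => _ br _; have := br (-1) F G' G.
by rewrite scaleN1r /cconj rmorphN1 mulN1r addrC => ->; rewrite addrC.
Qed.

Lemma sesqui_on0r F : b (r1 F) (r2 0) = 0.
Proof. by rewrite -(subrr 0) sesqui_onBr subrr. Qed.

Lemma is_dual_sesqui_onl G : is_dual ip1 (fun F => b (r1 F) (r2 G)).
Proof.
case: bb => bl _ [c bc]; split; first by move=> a x y; rewrite /= bl.
exists `|c * qnorm ip2 r2 (r2 G)| => x; apply: le_trans (bc x G) _.
by rewrite mulrAC ler_qnorm.
Qed.

Lemma is_dual_sesqui_onr F : is_dual ip2 (fun G => cconj (b (r1 F) (r2 G))).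
Proof.
case: bb => _ br [c bc]; split.
  move=> a x y; rewrite /= br /cconj rmorphD rmorphM.
  by congr (_ * _ + _); exact: cconjK.
exists `|c * qnorm ip1 r1 (r1 F)| => x; rewrite cmod_conj.
by apply: le_trans (bc F x) _; rewrite ler_qnorm.
Qed.
End Sesquilinear_on.

Lemma coercive_eq0 (H1 H2 : lmodType K) (ip1 : H1 -> H1 -> K) (ip2 : H2 -> H2 -> K)
    (B : H1 -> H2 -> K) :
  is_hilbert ip2 -> is_coercive ip1 ip2 B -> forall v, (forall w, B w v = 0) -> v = 0.
Proof.
case=> _ _ ip_pos _ [lam [lam_gt0 [Bv _]]] v Bv0.
have := Bv v; set S := (X in _ <= sup X) => lam_le_sup.
have sup_le0 : sup S <= 0.
  have [->|/set0P S_ne] := eqVneq S set0; first by rewrite sup0.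
  apply: ge_sup => // _ [w _ <-].
  by rewrite Bv0 /cmod /= expr0n addr0 sqrtr0 mul0r.
have hnorm_le0 : hnorm ip2 v <= 0.
  by rewrite -(pmulr_rle0 _ lam_gt0); exact: le_trans lam_le_sup sup_le0.
apply/eqP; apply: contraTT hnorm_le0 => /ip_pos.
by rewrite -ltNge /hnorm sqrtr_gt0.
Qed.
Lemma MN_eval (Ha Xa Xb Da : lmodType K) (Tra : Ha -> Da) (ra : Ha -> Xa)
    (b : Xa -> Xb -> K) (u : Xb) :
  (forall x y, Tra x = Tra y -> b (ra x) u = b (ra y) u) ->
  forall x, MN Tra ra b u (Tra x) = b (ra x) u.
Proof.
move=> bTr x; apply: bTr.
by apply: (@epsilon_spec _ _ (fun y => Tra y = Tra x)); exists x.
Qed.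

Lemma MN_glue_eval (Ha XO XC Xb Da : lmodType K) (rO : Ha -> XO) (rC : Ha -> XC)
    (Tra : Ha -> Da) :
  (forall x y, Tra x = Tra y ->
     exists w, [/\ rO w = rO x, rC w = rC y & Tra w = Tra x]) ->
  forall (h : Da -> XC -> K) (b : XO -> Xb -> K) (u : Xb),
  (forall x, b (rO x) u = h (Tra x) (rC x)) ->
  forall x, MN Tra rO b u (Tra x) = b (rO x) u.
Proof.
move=> glue h b u bE; apply: MN_eval.
exact: (glue_trace_determined glue (q := b^~ u) bE).
Qed.

Lemma DLE (Ha Hb Xa Xb : lmodType K) (P : (Ha -> K) -> Hb) (ra : Ha -> Xa)
    (rb : Hb -> Xb) (b : Xa -> Xb -> K) F :
  is_linear rb -> DL P ra rb b F = rb (P (Lop ra b (rb F)) - F).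
Proof. by move=> lrb; rewrite /DL is_linearB // addrC. Qed.
End Complex.

Section Layer_potentials.
Variables (R : realType) (H1 H2 XO1 XO2 XC1 XC2 D1 D2 : lmodType R[i]).
Variables (ip1 : H1 -> H1 -> R[i]) (ip2 : H2 -> H2 -> R[i]).
Variables (Tr1 : H1 -> D1) (Tr2 : H2 -> D2) (rO1 : H1 -> XO1) (rO2 : H2 -> XO2)
  (rC1 : H1 -> XC1) (rC2 : H2 -> XC2).
Variables (B : H1 -> H2 -> R[i]) (BO : XO1 -> XO2 -> R[i]) (BC : XC1 -> XC2 -> R[i]).
Variables (P : (H1 -> R[i]) -> H2) (Ps : (H2 -> R[i]) -> H1).
Hypotheses (lTr2 : is_linear Tr2) (lrO1 : is_linear rO1) (lrO2 : is_linear rO2).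
Hypotheses (bBO : is_bounded_sesqui_on ip1 ip2 rO1 rO2 BO)
  (bBC : is_bounded_sesqui_on ip1 ip2 rC1 rC2 BC).
Hypotheses (hH2 : is_hilbert ip2) (cB : is_coercive ip1 ip2 B) (sB : is_sesqui B).
Hypothesis hsplit : forall u v, B u v = BO (rO1 u) (rO2 v) + BC (rC1 u) (rC2 v).
Hypothesis hglue1 : forall phi psi : H1, Tr1 phi = Tr1 psi ->
  exists w, [/\ rO1 w = rO1 phi, rC1 w = rC1 psi & Tr1 w = Tr1 phi].
Hypothesis hglue2 : forall phi psi : H2, Tr2 phi = Tr2 psi ->
  exists w, [/\ rO2 w = rO2 phi, rC2 w = rC2 psi & Tr2 w = Tr2 phi].
Hypothesis hP : forall h, is_dual ip1 h -> forall phi, B phi (P h) = h phi.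
Hypothesis hPs : forall h, is_dual ip2 h -> forall psi, adjf B psi (Ps h) = h psi.

Local Notation PL F := (P (Lop rO1 BO (rO2 F))).
Local Notation PLs Phi := (Ps (Lop rO2 (adjf BO) (rO1 Phi))).

Lemma B_PL psi F : B psi (PL F) = BO (rO1 psi) (rO2 F).
Proof. exact: hP (is_dual_sesqui_onl bBO F) psi. Qed.

Lemma B_PLs Phi psi : B (PLs Phi) psi = BO (rO1 Phi) (rO2 psi).
Proof. by apply: cconj_inj; exact: hPs (is_dual_sesqui_onr bBO Phi) psi. Qed.

Lemma B_SL g psi : is_qdual ip1 Tr1 g -> B psi (SL P Tr1 g) = g (Tr1 psi).
Proof. by move=> qg; exact: hP (is_qdual_comp qg) psi. Qed.

Lemma B_SLs gam psi :
  is_qdual ip2 Tr2 gam -> B (SL Ps Tr2 gam) psi = cconj (gam (Tr2 psi)).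
Proof.
by move=> qgam; apply: cconj_inj; rewrite cconjK; exact: hPs (is_qdual_comp qgam) psi.
Qed.

Lemma BO_PL_sub psi F : BO (rO1 psi) (rO2 (PL F - F)) = - BC (rC1 psi) (rC2 (PL F)).
Proof. by rewrite (sesqui_onBr bBO) -(B_PL psi F) hsplit opprD addrA subrr add0r. Qed.

Lemma BO_PLs_sub Phi y : BO (rO1 (PLs Phi - Phi)) (rO2 y) = - BC (rC1 (PLs Phi)) (rC2 y).
Proof. by rewrite (sesqui_onBl bBO) -(B_PLs Phi y) hsplit opprD addrA subrr add0r. Qed.

Lemma MN_DL F x :
  MN Tr1 rO1 BO (DL P rO1 rO2 BO F) (Tr1 x) = BO (rO1 x) (rO2 (PL F - F)).
Proof.
rewrite DLE //; apply: (MN_glue_eval hglue1 (h := fun _ c => - BC c (rC2 (PL F)))) => y.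
exact: BO_PL_sub.
Qed.

Lemma MN_DLs Phi y : MN Tr2 rO2 (adjf BO) (DL Ps rO2 rO1 (adjf BO) Phi) (Tr2 y)
  = cconj (BO (rO1 (PLs Phi - Phi)) (rO2 y)).
Proof.
rewrite DLE //.
apply: (MN_glue_eval hglue2 (h := fun _ c => cconj (- BC (rC1 (PLs Phi)) c))) => y'.
by rewrite /adjf BO_PLs_sub.
Qed.

Lemma MN_SLs gam y : is_qdual ip2 Tr2 gam ->
  MN Tr2 rO2 (adjf BO) (rO1 (SL Ps Tr2 gam)) (Tr2 y)
  = cconj (BO (rO1 (SL Ps Tr2 gam)) (rO2 y)).
Proof.
move=> qgam; pose S := SL Ps Tr2 gam.
apply: (MN_glue_eval hglue2 (h := fun d c => cconj (cconj (gam d) - BC (rC1 S) c))) => y'.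
by rewrite /adjf -(B_SLs y' qgam) hsplit addrK.
Qed.

Lemma MN_DL_adjoint F Phi :
  pairL (Tr1 Phi) (MN Tr1 rO1 BO (DL P rO1 rO2 BO F))
  = pairR (MN Tr2 rO2 (adjf BO) (DL Ps rO2 rO1 (adjf BO) Phi)) (Tr2 F).
Proof.
rewrite /pairL /pairR MN_DL MN_DLs cconjK (sesqui_onBr bBO) (sesqui_onBl bBO).
by rewrite -(B_PLs Phi (PL F)) B_PL.
Qed.

Lemma SL_adjoint g gam : is_qdual ip1 Tr1 g -> is_qdual ip2 Tr2 gam ->
  pairR gam (Tr2 (SL P Tr1 g)) = pairL (Tr1 (SL Ps Tr2 gam)) g.
Proof. by move=> qg qgam; rewrite /pairR /pairL -B_SLs // B_SL. Qed.

Lemma TrDL_adjoint gam F : is_qdual ip2 Tr2 gam ->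
  pairR gam (TrDL P rO1 rO2 BO Tr2 F)
  = pairR (fun d => - gam d + MN Tr2 rO2 (adjf BO) (rO1 (SL Ps Tr2 gam)) d) (Tr2 F).
Proof.
move=> qgam; rewrite /pairR /TrDL MN_SLs // -(B_PL _ F) B_SLs // cconjK.
by rewrite addrC -is_linearB // (is_qdualB qgam lTr2) addrC.
Qed.

Lemma PL_trace F F' : Tr2 F = Tr2 F' -> Tr2 (PL F) = Tr2 (PL F').
Proof.
move=> TF; have TF0 : Tr2 (F - F') = Tr2 0 by rewrite is_linearB // TF subrr is_linear0.
have [z [zO zC zT]] := hglue2 TF0.
have PLB : PL F - PL F' = z.
  apply/eqP; rewrite -subr_eq0; apply/eqP; apply: (coercive_eq0 hH2 cB) => w.
  rewrite !(sesquiBr _ _ _ sB) !B_PL hsplit zO zC (sesqui_on0r bBC) addr0.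
  by rewrite (sesqui_onBr bBO) subrr.
by apply/eqP; rewrite -subr_eq0 -is_linearB // PLB zT TF0 is_linear0.
Qed.

Lemma TrDL_indep F F' :
  Tr2 F = Tr2 F' -> TrDL P rO1 rO2 BO Tr2 F = TrDL P rO1 rO2 BO Tr2 F'.
Proof. by move=> TF; rewrite /TrDL TF (PL_trace TF). Qed.
End Layer_potentials.

Unset Implicit Arguments.

Theorem lemma5p3 (R : realType)
  (H1 H2 XO1 XO2 XC1 XC2 D1 D2 : lmodType R[i])
  (ip1 : H1 -> H1 -> R[i]) (ip2 : H2 -> H2 -> R[i])
  (hH1 : is_hilbert ip1) (hH2 : is_hilbert ip2)
  (Tr1 : H1 -> D1) (Tr2 : H2 -> D2)
  (rO1 : H1 -> XO1) (rO2 : H2 -> XO2) (rC1 : H1 -> XC1) (rC2 : H2 -> XC2)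
  (lTr1 : is_linear Tr1) (lTr2 : is_linear Tr2)
  (lrO1 : is_linear rO1) (lrO2 : is_linear rO2)
  (lrC1 : is_linear rC1) (lrC2 : is_linear rC2)
  (B : H1 -> H2 -> R[i]) (BO : XO1 -> XO2 -> R[i]) (BC : XC1 -> XC2 -> R[i])
  (sB : is_sesqui B)
  (bB : exists c : R, forall u v, cmod (B u v) <= c * hnorm ip1 u * hnorm ip2 v)
  (bBO : is_bounded_sesqui_on ip1 ip2 rO1 rO2 BO)
  (bBC : is_bounded_sesqui_on ip1 ip2 rC1 rC2 BC)
  (cB : is_coercive ip1 ip2 B)
  (hsplit : forall u v, B u v = BO (rO1 u) (rO2 v) + BC (rC1 u) (rC2 v))
  (hglue1 : forall phi psi : H1, Tr1 phi = Tr1 psi ->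
     exists w, [/\ rO1 w = rO1 phi, rC1 w = rC1 psi & Tr1 w = Tr1 phi])
  (hglue2 : forall phi psi : H2, Tr2 phi = Tr2 psi ->
     exists w, [/\ rO2 w = rO2 phi, rC2 w = rC2 psi & Tr2 w = Tr2 phi])
  (* Newton potentials P^L and P^{L^*} (unique by coercivity, exist by Lax-Milgram) *)
  (P : (H1 -> R[i]) -> H2)
  (hP : forall h, is_dual ip1 h -> forall phi, B phi (P h) = h phi)
  (Ps : (H2 -> R[i]) -> H1)
  (hPs : forall h, is_dual ip2 h -> forall psi, adjf B psi (Ps h) = h psi) :
  forall (f : D2) (phi : D1) (g : D1 -> R[i]) (gam : D2 -> R[i]),
    (exists F, Tr2 F = f) -> (exists Phi, Tr1 Phi = phi) ->
    is_qdual ip1 Tr1 g -> is_qdual ip2 Tr2 gam ->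
  [/\ (* first adjoint relation *)
      (forall (F : H2) (Phi : H1), Tr2 F = f -> Tr1 Phi = phi ->
         pairL phi (MN Tr1 rO1 BO (DL P rO1 rO2 BO F))
         = pairR (MN Tr2 rO2 (adjf BO) (DL Ps rO2 rO1 (adjf BO) Phi)) f),
      (* second adjoint relation *)
      pairR gam (Tr2 (SL P Tr1 g)) = pairL (Tr1 (SL Ps Tr2 gam)) g,
      (* Tr_2^Omega D^B_Omega f is independent of F (in D_2 = image modulo null elements) *)
      (forall F F' : H2, Tr2 F = f -> Tr2 F' = f ->
         qnorm ip2 Tr2 (TrDL P rO1 rO2 BO Tr2 F - TrDL P rO1 rO2 BO Tr2 F') = 0) &
      (* third relation *)
      (forall F : H2, Tr2 F = f ->
         pairR gam (TrDL P rO1 rO2 BO Tr2 F)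
         = pairR (fun d => - gam d + MN Tr2 rO2 (adjf BO) (rO1 (SL Ps Tr2 gam)) d) f)].
Proof.
move=> f phi g gam _ _ qg qgam; split.
- move=> F Phi <- <-.
  exact: MN_DL_adjoint lrO1 lrO2 bBO hsplit hglue1 hglue2 hP hPs F Phi.
- exact: (SL_adjoint hP hPs qg qgam).
- move=> F F' <- TF'.
  rewrite (TrDL_indep lTr2 bBO bBC hH2 cB sB hsplit hglue2 hP (esym TF')) subrr.
  exact: qnorm0.
- by move=> F <-; exact: (TrDL_adjoint lTr2 bBO hsplit hglue2 hP hPs F qgam).
Qed.
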